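(* Let $G=(V,E)$ be a connected graph with $n$ vertices, $\tau$ a set of types with $|\tau|>1$, $f:\tau\to\mathbb{Q}_{\ge1}$ a fitness function, and $D\in\mathcal D(G,\tau)$. Let $f^*=\max\{f(j): j\in\tau\setminus\tau^+(f)\}$. Then for every $\alpha\in\tau^+(f)$, $\mathbb{E}(A_\alpha(G,\tau,f,D))\le(|\tau^+(f)|-1)n^6+\frac{f(\alpha)}{f(\alpha)-f^*}(n+1)n^3$.
   Context: $\tau^+(f)=\{i\in\tau:f(i)=\max_{j\in\tau}f(j)\}$. For $G=(V,E)$, $N(v)$ is the neighbourhood of $v$. $\Omega$ is the set of states $V\to\tau$; for $S\in\Omega$, $S|_{v\to w}$ equals $S$ except $w$ gets type $S(v)$. The Moran process $M(G,\tau,f,D)$ is the Markov chain on $\Omega$ with $M_0$ drawn from $D$ and, given $M_t$, a vertex $v$ chosen with probability $f(M_t(v))/\sum_uf(M_t(u))$, then $w\in N(v)$ uniformly, and $M_{t+1}=M_t|_{v\to w}$. $V_j(t)=\{v:M_t(v)=j\}$, and $A_j(G,\tau,f,D)=\min\{t\in\mathbb{Z}_{\ge0}:V_j(t)=V\text{ or }V_j(t)=\emptyset\}$. With $k=|\tau|$, $V[k]$ is the set of $k$-tuples of distinct vertices, $\tau[k]$ the set of $k$-tuples of distinct types, $\Omega(\mathbf u,\boldsymbol\gamma)$ the set of states mapping the $i$-th entry of $\mathbf u$ to the $i$-th entry of $\boldsymbol\gamma$ for all $i$. $\mathcal D(G,\tau)$ is the set of distributions $D$ on $\Omega$ for which there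 are distributions $D_{\mathbf u,\boldsymbol\gamma}$ on $\Omega(\mathbf u,\boldsymbol\gamma)$ with $\Pr_D(S)=\frac{1}{|V[k]\times\tau[k]|}\sum_{(\mathbf u,\boldsymbol\gamma)\in V[k]\times\tau[k]}\Pr_{D_{\mathbf u,\boldsymbol\gamma}}(S)$ for all $S$. *)

From HB Require Import structures.
From mathcomp Require Import all_boot all_order all_algebra.
From mathcomp Require Import reals ereal sequences.
Set Implicit Arguments. Unset Strict Implicit. Unset Printing Implicit Defensive.
Import Order.TTheory GRing.Theory Num.Theory.
Local Open Scope ring_scope.

Section Moran.
Variables (R : realType) (V T : finType).

Definition state := {ffun V -> T}.

Definition nbhd (e : rel V) (v : V) : {set V} := [set w | e v w].

Definition update (S : state) (v w : V) : state :=
  [ffun x => if x == w then S v else S x].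

Definition tauplus (f : T -> rat) : {set T} :=
  [set i | [forall j, f j <= f i]].

(* f^* = max of f over tau \ tau^+(f) (values are >= 1, so the bottom 0 is harmless
   as soon as tau \ tau^+(f) is nonempty) *)
Definition fstar (f : T -> rat) : rat :=
  \big[Num.max/0]_(j in ~: tauplus f) f j.

Definition total_fitness (f : T -> rat) (S : state) : R :=
  \sum_(u : V) ratr (f (S u)).

Definition moran_trans (e : rel V) (f : T -> rat) (S S' : state) : R :=
  \sum_(v : V) \sum_(w in nbhd e v)
     (ratr (f (S v)) / total_fitness f S) * (#|nbhd e v|%:R)^-1
       * ((update S v w == S')%:R).

Definition absorbed (j : T) (S : state) : bool :=
  [forall v, S v == j] || [forall v, S v != j].

(* mu t S = Pr(M_t = S and A_j > t)  (killed distribution) *)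
Fixpoint killed (e : rel V) (f : T -> rat) (D : state -> R) (j : T) (t : nat)
  (S : state) : R :=
  match t with
  | 0 => D S * (~~ absorbed j S)%:R
  | t'.+1 => \sum_(S0 : state) killed e f D j t' S0 * moran_trans e f S0 S
                * (~~ absorbed j S)%:R
  end.

Definition prob_A_gt (e : rel V) (f : T -> rat) (D : state -> R) (j : T) (t : nat) : R :=
  \sum_(S : state) killed e f D j t S.

(* E(A_j) = sum_{t >= 0} Pr(A_j > t), as an extended real (+oo if A_j is not a.s. finite
   or has infinite mean) *)
Definition expected_A (e : rel V) (f : T -> rat) (D : state -> R) (j : T) : \bar R :=
  (\sum_(0 <= t <oo) (prob_A_gt e f D j t)%:E)%E.

Definition is_distribution (D : state -> R) : Prop :=
  (forall S, 0 <= D S) /\ \sum_(S : state) D S = 1.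

Definition distinct_tuple (X : finType) (k : nat) (u : {ffun 'I_k -> X}) : bool :=
  injectiveb u.

Definition in_Omega (k : nat) (u : {ffun 'I_k -> V}) (g : {ffun 'I_k -> T}) (S : state) : bool :=
  [forall i, S (u i) == g i].

Definition in_Dcal (D : state -> R) : Prop :=
  exists Dug : {ffun 'I_#|T| -> V} -> {ffun 'I_#|T| -> T} -> state -> R,
    (forall u g, distinct_tuple u -> distinct_tuple g ->
       is_distribution (Dug u g) /\ (forall S, Dug u g S != 0 -> in_Omega u g S)) /\
    (forall S, D S =
       (#|[set u : {ffun 'I_#|T| -> V} | distinct_tuple u]|%:R
        * #|[set g : {ffun 'I_#|T| -> T} | distinct_tuple g]|%:R)^-1
       * \sum_(u : {ffun 'I_#|T| -> V} | distinct_tuple u)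
           \sum_(g : {ffun 'I_#|T| -> T} | distinct_tuple g) Dug u g S).

End Moran.

From HB Require Import structures.
From mathcomp Require Import all_boot all_order all_algebra.
From mathcomp Require Import reals ereal sequences.
From mathcomp Require Import ring lra.
Set Implicit Arguments. Unset Strict Implicit. Unset Printing Implicit Defensive.
Import Order.TTheory GRing.Theory Num.Theory.
Local Open Scope ring_scope.

(* Let phi(S) be the sum of 1/deg x over the
   vertices x of type alpha; then 0 <= phi <= n.  Since alpha has maximal
   fitness, every edge from an alpha vertex v to a vertex w of another type
   contributes (f alpha - f (S w)) / (F(S) deg v deg w) >= 0 to the expected
   one-step change of phi.  If alpha is the only fittest type, this drift is
   at least (f alpha - fstar f) / (n^3 f alpha) in every non-absorbed state,
   and the additive drift theorem gives
   E(A_alpha) <= n^4 f alpha / (f alpha - fstar f).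
   Otherwise phi^2 <= n^2 still has drift at least n^-4, coming from the
   variance of the step across such an edge, so E(A_alpha) <= n^6. *)

Lemma nneseries_le_ub (R : realType) (u : nat -> R) (c : R) :
  (forall t, 0 <= u t) -> (forall n, \sum_(t < n) u t <= c) ->
  (\sum_(0 <= t <oo) (u t)%:E <= c%:E)%E.
Proof.
move=> u_ge0 u_le; apply: ereal_normedtype.lime_le.
  by apply: is_cvg_nneseries => n _ _; rewrite lee_fin.
by apply: nearW => n /=; rewrite sumEFin lee_fin big_mkord.
Qed.

Section KilledChain.
Variables (R : realType) (St : finType) (P : St -> St -> R) (absorbing : pred St).
Variable mu : nat -> St -> R.
Hypothesis P_ge0 : forall S S', 0 <= P S S'.
Hypothesis mu0_ge0 : forall S, 0 <= mu 0 S.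
Hypothesis mu0_absorbing : forall S, absorbing S -> mu 0 S = 0.
Hypothesis muS : forall t S', mu t.+1 S' = \sum_S mu t S * P S S' * (~~ absorbing S')%:R.

Lemma killed_chain_ge0 t S : 0 <= mu t S.
Proof.
elim: t S => [|t IH] S //; rewrite muS; apply: sumr_ge0 => S0 _.
by rewrite !mulr_ge0 ?ler0n.
Qed.

Lemma killed_chain_absorbing t S : absorbing S -> mu t S = 0.
Proof.
case: t => [|t] aS; first exact: mu0_absorbing.
by rewrite muS; apply: big1 => S0 _; rewrite aS mulr0.
Qed.

Variables (Delta : St -> R) (del : R).
Hypothesis Delta_ge0 : forall S, 0 <= Delta S.
Hypothesis Delta_drift :
  forall S, ~~ absorbing S -> \sum_S' P S S' * Delta S' + del <= Delta S.

Lemma killed_chain_step t :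
  \sum_S mu t.+1 S * Delta S + del * \sum_S mu t S <= \sum_S mu t S * Delta S.
Proof.
have next : \sum_S' mu t.+1 S' * Delta S' <= \sum_S mu t S * \sum_S' P S S' * Delta S'.
  under eq_bigr do rewrite muS mulr_suml.
  rewrite exchange_big; apply: ler_sum => S _; rewrite mulr_sumr.
  apply: ler_sum => S' _; rewrite mulrA ler_wpM2r // ler_piMr ?lern1 ?leq_b1 //.
  by rewrite mulr_ge0 ?killed_chain_ge0.
apply: le_trans (lerD next (lexx _)) _.
rewrite mulr_sumr -big_split; apply: ler_sum => S _ /=.
rewrite (mulrC del) -mulrDr.
have [aS|naS] := boolP (absorbing S); first by rewrite killed_chain_absorbing // !mul0r.
by rewrite ler_wpM2l ?killed_chain_ge0 ?Delta_drift.
Qed.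

(* Additive drift: [\sum_S mu t S] is the probability that absorption has
   not happened by time t, so the left-hand side is [del] times a partial sum
   of the expected absorption time. *)
Lemma killed_chain_mass_le n :
  del * \sum_(t < n) \sum_S mu t S <= \sum_S mu 0 S * Delta S.
Proof.
suff : \sum_S mu n S * Delta S + del * \sum_(t < n) \sum_S mu t S
         <= \sum_S mu 0 S * Delta S.
  have : 0 <= \sum_S mu n S * Delta S.
    by apply: sumr_ge0 => S _; rewrite mulr_ge0 ?killed_chain_ge0.
  lra.
elim: n => [|n IH]; first by rewrite big_ord0 mulr0 addr0.
rewrite big_ord_recr /= mulrDr addrA; have := killed_chain_step n; lra.
Qed.

End KilledChain.

Lemma connect_cut_edge (V : finType) (e : rel V) (P : pred V) x y :
  connect e x y -> P x -> ~~ P y -> exists u w, [/\ e u w, P u & ~~ P w].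
Proof.
move/connectP=> [q]; elim: q x => [|z q IH] x /=; first by move=> _ -> ->.
case/andP=> exz pq y_last Px nPy.
have [Pz|nPz] := boolP (P z); first exact: IH pq y_last Pz nPy.
by exists x, z.
Qed.

Lemma connect_neq_edge (V : finType) (e : rel V) x y :
  connect e x y -> x != y -> exists w, e x w.
Proof.
move/connectP=> [[|z q]] /=; first by move=> _ ->; rewrite eqxx.
by case/andP=> exz _ _ _; exists z.
Qed.

Lemma sum_nbhd_ge_term (R : numDomainType) (V : finType) (e : rel V) (G : V -> V -> R) u w :
  (forall v w, 0 <= G v w) -> e u w -> G u w <= \sum_v \sum_(w in nbhd e v) G v w.
Proof.
move=> G_ge0 euw; rewrite (bigD1 u) //= (bigD1 w) ?inE //=.
rewrite -addrA lerDl addr_ge0 ?sumr_ge0 // => v _.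
exact: sumr_ge0.
Qed.

Lemma sum_nbhd_swap (R : nmodType) (V : finType) (e : rel V) (G : V -> V -> R) :
  symmetric e -> \sum_v \sum_(w in nbhd e v) G v w = \sum_v \sum_(w in nbhd e v) G w v.
Proof.
move=> e_sym; under eq_bigr do rewrite big_mkcond.
under [RHS]eq_bigr do rewrite big_mkcond.
rewrite [RHS]exchange_big; apply: eq_bigr => v _; apply: eq_bigr => w _.
by rewrite !inE e_sym.
Qed.

Lemma tauplus_max (T : finType) (f : T -> rat) alpha j : alpha \in tauplus f -> f j <= f alpha.
Proof. by rewrite inE => /forallP. Qed.

Lemma le_fstar (T : finType) (f : T -> rat) j : j \notin tauplus f -> f j <= fstar f.
Proof. by move=> j_notin; apply: le_bigmax_cond; rewrite inE. Qed.

Lemma fstar_lt (T : finType) (f : T -> rat) alpha :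
  alpha \in tauplus f -> 0 < f alpha -> fstar f < f alpha.
Proof.
move=> alpha_in fa_gt0; apply: bigmax_lt => // j; rewrite !inE negb_forall.
by case/existsP=> i; rewrite -ltNge => /lt_le_trans; apply; apply: tauplus_max.
Qed.

Section MoranChain.
Variables (R : realType) (V T : finType) (e : rel V) (f : T -> rat).
Hypothesis f_ge1 : forall i, 1 <= f i.
Hypothesis e_conn : forall u v : V, connect e u v.
Implicit Types (S : state V T) (Psi D : state V T -> R).

Local Notation fit i := (ratr (f i) : R).
Local Notation F S := (total_fitness R f S).

Definition inv_deg v : R := (#|nbhd e v|%:R)^-1.

Definition moran_rate S v : R := fit (S v) / F S * inv_deg v.

Definition moran_drift Psi S : R :=
  \sum_v \sum_(w in nbhd e v) moran_rate S v * (Psi (update S v w) - Psi S).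

Lemma fit_ge1 i : 1 <= fit i.
Proof. by rewrite -(rmorph1 (ratr : rat -> R)) ler_rat. Qed.

Lemma total_fitness_ge_card S : #|V|%:R <= F S.
Proof.
rewrite /total_fitness -sum1_card natr_sum; apply: ler_sum => u _.
exact: fit_ge1.
Qed.

Lemma total_fitness_ge0 S : 0 <= F S.
Proof. exact: le_trans (ler0n _ _) (total_fitness_ge_card S). Qed.

Lemma total_fitness_gt0 S : (0 < #|V|)%N -> 0 < F S.
Proof. by move=> V_gt0; apply: lt_le_trans (total_fitness_ge_card S); rewrite ltr0n. Qed.

Lemma inv_deg_ge0 v : 0 <= inv_deg v.
Proof. by rewrite invr_ge0 ler0n. Qed.

Lemma inv_deg_le1 v : inv_deg v <= 1.
Proof.
rewrite /inv_deg; case: #|_| => [|k]; first by rewrite invr0.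
by rewrite invf_le1 ?ler1n ?ltr0n.
Qed.

Lemma inv_deg_ge_inv_card v : (0 < #|nbhd e v|)%N -> #|V|%:R^-1 <= inv_deg v.
Proof.
move=> deg_gt0; have V_gt0 : (0 < #|V|)%N by apply/card_gt0P; exists v.
by rewrite lef_pV2 ?posrE ?ltr0n // ler_nat max_card.
Qed.

Lemma moran_rate_ge0 S v : 0 <= moran_rate S v.
Proof.
have fit_ge0 i : 0 <= fit i by apply: le_trans ler01 (fit_ge1 i).
by rewrite /moran_rate mulr_ge0 ?inv_deg_ge0 // mulr_ge0 // invr_ge0 total_fitness_ge0.
Qed.

Lemma moran_trans_ge0 S S' : 0 <= moran_trans R e f S S'.
Proof.
apply: sumr_ge0 => v _; apply: sumr_ge0 => w _.
by rewrite mulr_ge0 ?ler0n // moran_rate_ge0.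
Qed.

Lemma moran_trans_expand S Psi :
  \sum_S' moran_trans R e f S S' * Psi S' =
  \sum_v \sum_(w in nbhd e v) moran_rate S v * Psi (update S v w).
Proof.
under eq_bigr do rewrite mulr_suml.
rewrite exchange_big; apply: eq_bigr => v _ /=.
under eq_bigr do rewrite mulr_suml.
rewrite exchange_big; apply: eq_bigr => w _ /=.
rewrite (bigD1 (update S v w)) //= eqxx mulr1 big1 ?addr0 // => S' /negbTE.
by rewrite eq_sym => ->; rewrite mulr0 mul0r.
Qed.

Lemma sum_moran_rate S (v0 : V) : (forall v, (0 < #|nbhd e v|)%N) ->
  \sum_v \sum_(w in nbhd e v) moran_rate S v = 1.
Proof.
move=> deg_gt0; have F_gt0 : 0 < F S.
  by apply: total_fitness_gt0; apply/card_gt0P; exists v0.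
transitivity (\sum_v fit (S v) / F S).
  apply: eq_bigr => v _; rewrite sumr_const -mulr_natr /moran_rate -!mulrA mulVf ?mulr1 //.
  by rewrite pnatr_eq0 -lt0n deg_gt0.
by rewrite -mulr_suml divff // gt_eqF.
Qed.

Lemma moran_trans_mean S (v0 : V) Psi :
  (forall v, (0 < #|nbhd e v|)%N) ->
  \sum_S' moran_trans R e f S S' * Psi S' = Psi S + moran_drift Psi S.
Proof.
move=> deg_gt0; rewrite moran_trans_expand.
rewrite -[in Psi S](mulr1 (Psi S)) -(sum_moran_rate S v0 deg_gt0) mulr_sumr.
rewrite -big_split; apply: eq_bigr => v _ /=.
rewrite mulr_sumr -big_split; apply: eq_bigr => w _ /=; ring.
Qed.

Lemma moran_drift_cst_sub (M : R) Psi S :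
  moran_drift (fun S => M - Psi S) S = - moran_drift Psi S.
Proof.
rewrite /moran_drift -sumrN; apply: eq_bigr => v _.
rewrite -sumrN; apply: eq_bigr => w _; ring.
Qed.

Lemma not_absorbed_edge j S : ~~ absorbed j S ->
  exists u w, [/\ e u w, S u = j & S w != j].
Proof.
rewrite /absorbed negb_or => /andP[/forallPn[y Sy] /forallPn[x]].
rewrite negbK => Sx.
have [u [w [euw /eqP Su Sw]]] := connect_cut_edge (P := fun v => S v == j) (e_conn x y) Sx Sy.
by exists u, w.
Qed.

Lemma not_absorbed_deg_gt0 j S : ~~ absorbed j S -> forall v, (0 < #|nbhd e v|)%N.
Proof.
move=> /not_absorbed_edge[u [w [_ Su Sw]]] v.
have [z vz] : exists z, v != z.
  have [vu|] := eqVneq v u; last by exists u.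
  by exists w; apply: contra Sw => /eqP <-; rewrite vu Su.
have [w' evw'] := connect_neq_edge (e_conn v z) vz.
by apply/card_gt0P; exists w'; rewrite inE.
Qed.

Lemma killed_absorbed D j t S : absorbed j S -> killed e f D j t S = 0.
Proof.
case: t => [|t] /= aS; first by rewrite aS mulr0.
by apply: big1 => S0 _; rewrite aS mulr0.
Qed.

Lemma prob_A_gt_card0 D j t : #|V| = 0%N -> prob_A_gt e f D j t = 0.
Proof.
move=> V0; apply: big1 => S _; apply: killed_absorbed.
by apply/orP; left; apply/forallP => v; move: (card0_eq V0 v); rewrite !inE.
Qed.

Lemma killed_ge0 D j t S : (forall S, 0 <= D S) -> 0 <= killed e f D j t S.
Proof.
move=> D_ge0; apply: (killed_chain_ge0 (P := moran_trans R e f) (absorbing := absorbed j)) => //.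
- exact: moran_trans_ge0.
- by move=> S0; rewrite mulr_ge0 ?ler0n.
Qed.

Lemma expected_A_le D j (c : R) : (forall S, 0 <= D S) ->
  (forall N, \sum_(t < N) prob_A_gt e f D j t <= c) -> (expected_A e f D j <= c%:E)%E.
Proof.
move=> D_ge0; apply: nneseries_le_ub => t.
by apply: sumr_ge0 => S _; apply: killed_ge0.
Qed.

Lemma absorption_sum_le_drift D j Psi (M del : R) :
  is_distribution D -> (forall S, 0 <= Psi S <= M) -> 0 <= M -> 0 < del ->
  (forall S, ~~ absorbed j S -> del <= moran_drift Psi S) ->
  forall N, \sum_(t < N) prob_A_gt e f D j t <= M / del.
Proof.
move=> [D_ge0 D_sum1] Psi_bd M_ge0 del_gt0 Psi_drift N.
rewrite ler_pdivlMr // mulrC.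
apply: le_trans (killed_chain_mass_le (P := moran_trans R e f) (absorbing := absorbed j)
  (Delta := fun S => M - Psi S) _ _ _ _ _ _ N) _ => //.
- exact: moran_trans_ge0.
- by move=> S; rewrite mulr_ge0 ?ler0n.
- by move=> S aS; rewrite /= aS mulr0.
- by move=> S; rewrite subr_ge0; case/andP: (Psi_bd S).
- move=> S nS; have [v0 _] := not_absorbed_edge nS.
  rewrite (moran_trans_mean _ v0) ?moran_drift_cst_sub; last exact: not_absorbed_deg_gt0 nS.
  by have := Psi_drift S nS; lra.
rewrite -[leRHS]mulr1 -D_sum1 mulr_sumr; apply: ler_sum => S _ /=.
have [Psi_ge0 _] := andP (Psi_bd S).
rewrite [M * _]mulrC -mulrA ler_wpM2l //.
by case: (absorbed j S); rewrite /= ?mul0r ?mul1r ?gerBl.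
Qed.

End MoranChain.

Section TypePotential.
Variables (R : realType) (V T : finType) (e : rel V) (f : T -> rat) (alpha : T).
Hypothesis f_ge1 : forall i, 1 <= f i.
Hypothesis e_sym : symmetric e.
Hypothesis e_conn : forall u v : V, connect e u v.
Hypothesis alpha_max : forall j, f j <= f alpha.
Implicit Types (S : state V T) (D : state V T -> R).

Local Notation fit i := (ratr (f i) : R).
Local Notation F S := (total_fitness R f S).
Local Notation inv_deg := (inv_deg R e).
Local Notation moran_rate := (moran_rate R e f).
Local Notation moran_drift := (moran_drift e f).

Definition is_alpha S v : R := (S v == alpha)%:R.

Definition potential S : R := \sum_x is_alpha S x * inv_deg x.

Definition potential_step S v w : R := inv_deg w * (is_alpha S v - is_alpha S w).

Definition potential_flux S v w : R :=
  inv_deg v * inv_deg w / F S * (is_alpha S v * (1 - is_alpha S w)) * (fit (S v) - fit (S w)).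

Lemma potential_update S v w : potential (update S v w) = potential S + potential_step S v w.
Proof.
rewrite /potential (bigD1 w) // [in RHS](bigD1 w) //= /is_alpha ffunE eqxx.
under eq_bigr => x /negbTE xw do rewrite ffunE xw.
rewrite /potential_step /is_alpha; ring.
Qed.

Lemma potential_ge0 S : 0 <= potential S.
Proof. by apply: sumr_ge0 => x _; rewrite mulr_ge0 ?inv_deg_ge0 ?ler0n. Qed.

Lemma potential_le_card S : potential S <= #|V|%:R.
Proof.
rewrite -sum1_card natr_sum; apply: ler_sum => x _.
by rewrite /is_alpha; case: (_ == _); rewrite ?mul1r ?mul0r ?inv_deg_le1.
Qed.

Lemma moran_drift_potential S :
  moran_drift potential S = \sum_v \sum_(w in nbhd e v) potential_flux S v w.
Proof.
(* Pair the move of v onto w with the move of w onto v. *)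
pose gain v w := inv_deg v * inv_deg w / F S * fit (S v) * (is_alpha S v * (1 - is_alpha S w)).
pose loss v w := inv_deg v * inv_deg w / F S * fit (S v) * (is_alpha S w * (1 - is_alpha S v)).
transitivity (\sum_v \sum_(w in nbhd e v) gain v w - \sum_v \sum_(w in nbhd e v) loss v w).
  rewrite -sumrB; apply: eq_bigr => v _; rewrite -sumrB; apply: eq_bigr => w _.
  rewrite potential_update /gain /loss /moran_rate /potential_step; ring.
rewrite [X in _ - X](sum_nbhd_swap _ e_sym) -sumrB; apply: eq_bigr => v _.
rewrite -sumrB; apply: eq_bigr => w _.
rewrite /gain /loss /potential_flux; ring.
Qed.

Lemma potential_flux_ge0 S v w : 0 <= potential_flux S v w.
Proof.
rewrite /potential_flux /is_alpha; case: eqP => [->|_]; last by rewrite !mul0r mulr0 mul0r.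
have F_ge0 := total_fitness_ge0 R f_ge1 S.
rewrite mul1r !mulr_ge0 ?inv_deg_ge0 ?invr_ge0 ?subr_ge0 ?ler_rat //.
by case: (_ == _); rewrite ?subrr ?subr0.
Qed.

Lemma moran_drift_potential_ge0 S : 0 <= moran_drift potential S.
Proof.
rewrite moran_drift_potential; apply: sumr_ge0 => v _; apply: sumr_ge0 => w _.
exact: potential_flux_ge0.
Qed.

Lemma moran_drift_potential_ge_edge S u w : e u w -> S u = alpha -> S w != alpha ->
  inv_deg u * inv_deg w / F S * (fit alpha - fit (S w)) <= moran_drift potential S.
Proof.
move=> euw Su Sw; rewrite moran_drift_potential.
apply: le_trans (sum_nbhd_ge_term (potential_flux_ge0 S) euw).
by rewrite /potential_flux /is_alpha Su eqxx (negbTE Sw) subr0 !mulr1.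
Qed.

Lemma moran_drift_potential_sqr S :
  moran_drift (fun S => potential S ^+ 2) S = 2 * potential S * moran_drift potential S
    + \sum_v \sum_(w in nbhd e v) moran_rate S v * potential_step S v w ^+ 2.
Proof.
rewrite /moran_drift mulr_sumr -big_split; apply: eq_bigr => v _ /=.
rewrite mulr_sumr -big_split; apply: eq_bigr => w _ /=.
rewrite !potential_update; ring.
Qed.

Lemma moran_drift_potential_sqr_ge_edge S u w : e u w -> S u = alpha -> S w != alpha ->
  moran_rate S u * inv_deg w ^+ 2 <= moran_drift (fun S => potential S ^+ 2) S.
Proof.
move=> euw Su Sw; rewrite moran_drift_potential_sqr.
have step_sqr_ge0 v w' : 0 <= moran_rate S v * potential_step S v w' ^+ 2.
  by rewrite mulr_ge0 ?sqr_ge0 ?moran_rate_ge0.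
have cross_ge0 : 0 <= 2 * potential S * moran_drift potential S.
  by rewrite !mulr_ge0 ?potential_ge0 ?moran_drift_potential_ge0.
have := sum_nbhd_ge_term (step_sqr_ge0) euw.
rewrite /potential_step /is_alpha Su eqxx (negbTE Sw) subr0 mulr1.
lra.
Qed.

Lemma total_fitness_le_card_fit S : F S <= #|V|%:R * fit alpha.
Proof.
rewrite /total_fitness -sum1_card natr_sum mulr_suml; apply: ler_sum => x _.
by rewrite mul1r ler_rat.
Qed.

Lemma inv_card_le_fit_share S : (0 < #|V|)%N -> #|V|%:R^-1 <= fit alpha / F S.
Proof.
move=> V_gt0; have F_gt0 := total_fitness_gt0 R f_ge1 S V_gt0.
by rewrite ler_pdivlMr // ler_pdivrMl ?ltr0n // total_fitness_le_card_fit.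
Qed.

Lemma absorption_sum_le_sqr_potential D : is_distribution D -> (0 < #|V|)%N ->
  forall N, \sum_(t < N) prob_A_gt e f D alpha t <= #|V|%:R ^+ 6.
Proof.
move=> hD V_gt0 N; set n : R := #|V|%:R.
have n_gt0 : 0 < n by rewrite ltr0n.
have -> : n ^+ 6 = n ^+ 2 / (n^-1 * n^-1 * n^-1 ^+ 2) by field; rewrite gt_eqF.
apply: (absorption_sum_le_drift f_ge1 e_conn hD (Psi := fun S => potential S ^+ 2))
  => [S|||S nS].
- by rewrite /= sqr_ge0 lerXn2r ?nnegrE ?potential_ge0 ?potential_le_card ?ltW.
- by rewrite sqr_ge0.
- by rewrite !mulr_gt0 ?exprn_gt0 ?invr_gt0.
have [u [w [euw Su Sw]]] := not_absorbed_edge e_conn nS.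
have deg_gt0 := not_absorbed_deg_gt0 e_conn nS.
apply: le_trans (moran_drift_potential_sqr_ge_edge euw Su Sw).
have inv_n_ge0 : 0 <= n^-1 by rewrite invr_ge0 ltW.
rewrite /moran_rate Su; apply: ler_pM; rewrite ?mulr_ge0 ?exprn_ge0 //.
  by apply: ler_pM; rewrite ?inv_card_le_fit_share ?inv_deg_ge_inv_card.
by rewrite lerXn2r ?nnegrE ?inv_deg_ge0 ?inv_deg_ge_inv_card.
Qed.

Lemma absorption_sum_le_potential D (c : rat) : is_distribution D -> (0 < #|V|)%N ->
  (forall j, j != alpha -> f j <= c) -> c < f alpha ->
  forall N, \sum_(t < N) prob_A_gt e f D alpha t
              <= #|V|%:R ^+ 4 * (fit alpha / (fit alpha - ratr c)).
Proof.
move=> hD V_gt0 f_le_c c_lt N; set n : R := #|V|%:R; set fa := fit alpha.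
have n_gt0 : 0 < n by rewrite ltr0n.
have fa_gt0 : 0 < fa by apply: lt_le_trans ltr01 (fit_ge1 R f_ge1 alpha).
have gap_gt0 : 0 < fa - ratr c by rewrite subr_gt0 ltr_rat.
have -> : n ^+ 4 * (fa / (fa - ratr c)) = n / (n^-1 * n^-1 / (n * fa) * (fa - ratr c)).
  by field; rewrite ?gt_eqF.
apply: (absorption_sum_le_drift f_ge1 e_conn hD (Psi := potential)) => [S|||S nS].
- by rewrite potential_ge0 potential_le_card.
- exact: ltW.
- by rewrite mulr_gt0 // !mulr_gt0 ?invr_gt0 // mulr_gt0.
have [u [w [euw Su Sw]]] := not_absorbed_edge e_conn nS.
have deg_gt0 := not_absorbed_deg_gt0 e_conn nS.
apply: le_trans (moran_drift_potential_ge_edge euw Su Sw).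
have inv_n_ge0 : 0 <= n^-1 by rewrite invr_ge0 ltW.
have F_gt0 := total_fitness_gt0 R f_ge1 S V_gt0.
have nfa_gt0 : 0 < n * fa by rewrite mulr_gt0.
have inv_nfa_ge0 : 0 <= (n * fa)^-1 by rewrite invr_ge0 ltW.
apply: ler_pM; [by rewrite !mulr_ge0 | exact: ltW | |].
  apply: ler_pM; [by rewrite mulr_ge0 | by [] | |].
    by apply: ler_pM; rewrite ?inv_deg_ge_inv_card.
  by rewrite lef_pV2 ?posrE //; apply: total_fitness_le_card_fit.
by rewrite /fa lerD2l lerN2 ler_rat f_le_c.
Qed.

End TypePotential.

Theorem corollary20 (R : realType) (V T : finType) (e : rel V)
  (e_sym : symmetric e) (e_irr : irreflexive e)
  (e_conn : forall u v : V, connect e u v)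
  (f : T -> rat) (f_ge1 : forall i, 1 <= f i)
  (D : state V T -> R)
  (hT : (1 < #|T|)%N)
  (hfstar : tauplus f != [set: T])
  (hD : is_distribution D) (hDcal : in_Dcal D) :
  forall alpha, alpha \in tauplus f ->
    (expected_A e f D alpha <=
      (ratr ((#|tauplus f|%:R - 1) * (#|V|%:R) ^+ 6
             + f alpha / (f alpha - fstar f) * (#|V|%:R + 1) * (#|V|%:R) ^+ 3
             : rat) : R)%:E)%E.
Proof.
move=> alpha alpha_in; have [D_ge0 _] := hD.
have alpha_max j : f j <= f alpha by apply: tauplus_max.
have fa_gt0 : 0 < f alpha by apply: lt_le_trans ltr01 (f_ge1 alpha).
rewrite !(rmorphXn, rmorphB, rmorphD, rmorphM, fmorphV, rmorph_nat, rmorph1).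
set k := #|tauplus f|; set n : R := #|V|%:R.
set q : R := ratr (f alpha) / (ratr (f alpha) - ratr (fstar f)).
have q_gt0 : 0 < q by rewrite divr_gt0 ?ltr0q // subr_gt0 ltr_rat fstar_lt.
have n_ge0 : 0 <= n by rewrite ler0n.
have n6_ge0 : 0 <= n ^+ 6 by rewrite exprn_ge0.
have qn3_ge0 : 0 <= q * n ^+ 3 by rewrite (mulr_ge0 (ltW q_gt0)) ?exprn_ge0.
have k_gt0 : (0 < k)%N by apply/card_gt0P; exists alpha.
have k_ge1 : 1 <= k%:R :> R by rewrite ler1n.
apply: (expected_A_le f_ge1 D_ge0) => N.
have [V0|V_gt0] := posnP #|V|.
  by rewrite big1 => [|t _]; [nra | exact: prob_A_gt_card0 V0].
have [k1|k_neq1] := eqVneq k 1%N.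
  have [x tau_x] := cards1P (introT eqP k1).
  have f_le_fstar j : j != alpha -> f j <= fstar f.
    by move=> j_neq; apply: le_fstar; move: alpha_in j_neq; rewrite tau_x !inE => /eqP ->.
  have := absorption_sum_le_potential f_ge1 e_sym e_conn alpha_max hD V_gt0
    f_le_fstar (fstar_lt alpha_in fa_gt0) N.
  rewrite k1 -/n -/q; nra.
have k_ge2 : 2 <= k%:R :> R by rewrite ler_nat ltn_neqAle eq_sym k_neq1.
have := absorption_sum_le_sqr_potential f_ge1 e_sym e_conn alpha_max hD V_gt0 N.
rewrite -/n; nra.
Qed.
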